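(* Let $G_1,\dots,G_m$ be finite subgraphs of $\mathsf{Path}_{\mathbb Z}$, let $I\subseteq[m]$ with $m\in I$, let $\sigma=\sigma_I$, and let $j\in[m]$. Then \[\vec\Delta(G_{\tilde\sigma_j(1)},\dots,G_{\tilde\sigma_j(m)})\ \ge\ \sum_{i\in I}\Delta(G_i\ominus(G_1\cup\dots\cup G_{i-1})).\]
   Context: Graphs are finite simple graphs without isolated vertices; $\emptyset$ is the empty graph. $\mathsf{Path}_{\mathbb Z}$ has vertex set $\mathbb Z$ and edges $\{i-1,i\}$. $\Delta(G)$ is the number of connected components of $G$; $G\ominus F$ is the union of components of $G$ sharing no vertex with $F$; $\vec\Delta(H_1,\dots,H_m)=\sum_{l=1}^m\Delta(H_l\ominus(H_1\cup\dots\cup H_{l-1}))$. For $I\subseteq[m]$ with $m\in I$, write $I=\{i_1<\dots<i_p\}$ and $i_0:=0$; the permutation $\sigma_I$ of $[m]$ is $\sigma_I(j)=i_h$ if $j=i_{h-1}+1$ for some $h\in[p]$, and $\sigma_I(j)=j-1$ otherwise. For $\sigma=\sigma_I$ and $j\in[m]$, $\tilde\sigma_j:=\sigma_{\tilde I_j}$ where $\tilde I_j=I\cup[i_{h-1}]$ if $j=i_h\in I$, and $\tilde I_j=I\cup[j-1]$ if $j\notin I$ (here $[r]=\{1,\dots,r\}$, $[0]=\emptyset$). *)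

From HB Require Import structures.
From mathcomp Require Import all_boot all_order all_algebra.
From mathcomp Require Import finmap boolp.
Set Implicit Arguments. Unset Strict Implicit. Unset Printing Implicit Defensive.
Import Order.TTheory GRing.Theory Num.Theory.
Local Open Scope fset_scope.
Local Open Scope ring_scope.

(* A finite subgraph (without isolated vertices) of Path_Z is determined by
   its finite edge set; the integer k encodes the edge {k-1, k}. *)
Definition graph := {fset int}.

Definition verts (G : graph) : {fset int} := G `|` [fset k - 1 | k in G].

Definition adj (G : graph) : rel int :=
  fun u v => ((v == u + 1) && (v \in G)) || ((u == v + 1) && (u \in G)).

Definition gconn (G : graph) (u v : int) : Prop :=
  exists p : seq int, path (adj G) u p /\ last u p = v.

Definition comp (G : graph) (v : int) : {fset int} :=
  [fset w in verts G | `[< gconn G v w >]].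

Definition components (G : graph) : {fset {fset int}} :=
  [fset comp G v | v in verts G].

Definition Delta (G : graph) : nat := #|` components G|.

(* G ominus F : union of the components of G sharing no vertex with F,
   i.e. the edges of G whose component is disjoint from V(F). *)
Definition ominus (G F : graph) : graph :=
  [fset k in G | comp G k `&` verts F == fset0].

Definition prefU (G : nat -> graph) (i : nat) : graph :=
  \big[fsetU/fset0]_(1 <= l < i) G l.

Definition vecDelta (H : nat -> graph) (m : nat) : nat :=
  (\sum_(1 <= l < m.+1) Delta (ominus (H l) (prefU H l)))%N.

(* the sequence i_0 = 0 < i_1 < ... < i_p of I = {i_1 < ... < i_p} *)
Definition iseq (I : {fset nat}) : seq nat := 0%N :: sort leq I.

Definition sigma (I : {fset nat}) (j : nat) : nat :=
  let t := iseq I in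
  let h0 := index j.-1 t in
  if (0 < j)%N && (h0 < size I)%N then nth 0%N t h0.+1 else j.-1.

Definition rng (r : nat) : {fset nat} := [fset x | x in iota 1 r].

Definition tildeI (I : {fset nat}) (j : nat) : {fset nat} :=
  if j \in I then I `|` rng (nth 0%N (iseq I) (index j (iseq I)).-1)
  else I `|` rng j.-1.

From Pilot Require Import Defs.
From HB Require Import structures.
From mathcomp Require Import all_boot all_order all_algebra.
From mathcomp Require Import finmap boolp zify.
Local Open Scope fset_scope.
Set Implicit Arguments. Unset Strict Implicit. Unset Printing Implicit Defensive.

(* Write I ⊆ J := tildeI I j as 0 = i_0 < i_1 < ... < i_p.  The permutation
   sigma_J places G_(i_h) at position i_(h-1) + 1, and every graph placed at an
   earlier position l <= i_(h-1) is G_(l-1) or some G_(i_k) with k < h, hence has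
   index in [1, i_(h-1)].  So the graphs preceding G_(i_h) in the permuted
   sequence are among G_1, ..., G_(i_h - 1).  Since the components of G ⊖ F are
   components of G, enlarging F can only remove components from G ⊖ F; thus the
   term of i_h in the left-hand sum is at most the term at position i_(h-1) + 1
   of the permuted vecDelta.  These positions are distinct, so summing over J,
   and then shrinking J to I, gives the inequality. *)

Lemma adj_subset (H H' : graph) : H `<=` H' -> subrel (adj H) (adj H').
Proof.
move=> /fsubsetP sHH' u v; rewrite /adj.
by case/orP=> /andP[-> /sHH' ->]; rewrite ?orbT.
Qed.

Lemma adj_verts (G : graph) u v : adj G u v -> v \in verts G.
Proof.
rewrite /adj inE => /orP[/andP[_ ->] // | /andP[/eqP-> uG]].
by apply/orP; right; apply/imfsetP; exists (v + 1)%R; rewrite //= GRing.addrK.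
Qed.

Lemma gconn_refl (G : graph) u : gconn G u u.
Proof. by exists [::]. Qed.

Lemma gconn_adj (G : graph) u v : adj G u v -> gconn G u v.
Proof. by move=> uv; exists [:: v]; rewrite /= uv. Qed.

Lemma gconn_trans (G : graph) u v w : gconn G u v -> gconn G v w -> gconn G u w.
Proof.
move=> [p [up <-]] [q [vq <-]].
by exists (p ++ q); rewrite cat_path last_cat up vq.
Qed.

Lemma gconn_subset (H H' : graph) u v : H `<=` H' -> gconn H u v -> gconn H' u v.
Proof.
by move=> sHH' [p [up pv]]; exists p; split=> //; exact: (sub_path (adj_subset sHH')).
Qed.

Lemma gconn_verts (G : graph) u v : u \in verts G -> gconn G u v -> v \in verts G.
Proof.
move=> uG [p [+ <-]]; elim: p u uG => [|x p IHp] u uG //= /andP[ux xp].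
exact: IHp (adj_verts ux) xp.
Qed.

Lemma verts_subset (H H' : graph) : H `<=` H' -> verts H `<=` verts H'.
Proof. by move=> sHH'; rewrite fsetUSS // subset_imfset //; apply/fsubsetP. Qed.

Lemma verts_gconn_edge (G : graph) v : v \in verts G -> exists2 k, k \in G & gconn G k v.
Proof.
rewrite inE => /orP[vG | /imfsetP[k /= kG ->]]; first by exists v => //; apply: gconn_refl.
exists k => //; apply: gconn_adj.
by rewrite /adj GRing.subrK eqxx kG orbT.
Qed.

Lemma in_comp (G : graph) v w : (w \in Defs.comp G v) = (w \in verts G) && `[< gconn G v w >].
Proof. by rewrite inE. Qed.

Lemma comp_gconn_subset (G : graph) u w : gconn G u w -> Defs.comp G w `<=` Defs.comp G u.
Proof.
move=> uw; apply/fsubsetP => x; rewrite !in_comp => /andP[-> /asboolP wx].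
exact/asboolP/(gconn_trans uw).
Qed.

Section ClosedSubgraph.

Variables (H H' : graph) (v : int).
Hypothesis sHH' : H `<=` H'.
Hypothesis H_closed : forall e, e \in H' -> gconn H' v e -> e \in H.

Lemma path_closed_subgraph u p :
  gconn H' v u -> path (adj H') u p -> path (adj H) u p.
Proof.
elim: p u => [//|x p IHp] u vu /= /andP[ux xp].
have vx : gconn H' v x by apply: gconn_trans vu (gconn_adj ux).
rewrite IHp // andbT; move: ux; rewrite /adj.
case/orP=> /andP[-> e]; first by rewrite (H_closed e vx).
by rewrite (H_closed e vu) orbT.
Qed.

Lemma comp_closed_subgraph : v \in verts H -> Defs.comp H v = Defs.comp H' v.
Proof.
move=> vH; apply/eqP; rewrite eqEfsubset; apply/andP; split; apply/fsubsetP=> w.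
  rewrite !in_comp => /andP[/(fsubsetP (verts_subset sHH')) -> /asboolP vw].
  exact/asboolP/(gconn_subset sHH').
rewrite !in_comp => /andP[_ /asboolP [p [vp pw]]].
have vw : gconn H v w by exists p; rewrite path_closed_subgraph //; apply: gconn_refl.
by rewrite (gconn_verts vH vw); apply/asboolP.
Qed.

End ClosedSubgraph.

Lemma in_ominus (G F : graph) k :
  (k \in ominus G F) = (k \in G) && [disjoint Defs.comp G k & verts F]%fset.
Proof. by rewrite /ominus !inE -fsetI_eq0. Qed.

Lemma ominus_subset (G F : graph) : ominus G F `<=` G.
Proof. by apply/fsubsetP => k; rewrite in_ominus => /andP[]. Qed.

Lemma ominusS (G F F' : graph) : F `<=` F' -> ominus G F' `<=` ominus G F.
Proof.
move=> sFF'; apply/fsubsetP => k; rewrite !in_ominus => /andP[-> /=].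
exact/fdisjointWr/verts_subset.
Qed.

Lemma comp_ominus (G F : graph) v :
  v \in verts (ominus G F) -> Defs.comp (ominus G F) v = Defs.comp G v.
Proof.
move=> vGF; have [k kGF /(gconn_subset (ominus_subset G F)) kv] := verts_gconn_edge vGF.
apply: comp_closed_subgraph vGF => [|e eG ve]; first exact: ominus_subset.
rewrite in_ominus eG /=.
move: kGF; rewrite in_ominus => /andP[_]; apply: fdisjointWl.
exact/comp_gconn_subset/(gconn_trans kv).
Qed.

Lemma Delta_ominusS (G F F' : graph) :
  F `<=` F' -> (Delta (ominus G F') <= Delta (ominus G F))%N.
Proof.
move=> sFF'; apply/fsubset_leq_card/fsubsetP => _ /imfsetP[v /= vGF' ->].
have vGF : v \in verts (ominus G F).
  by apply: fsubsetP vGF'; exact/verts_subset/ominusS.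
by rewrite comp_ominus // -(comp_ominus vGF) in_imfset.
Qed.

Lemma leq_sum_uniq_subset (T : eqType) (s s' : seq T) (F : T -> nat) :
  uniq s -> uniq s' -> {subset s <= s'} ->
  (\sum_(x <- s) F x <= \sum_(x <- s') F x)%N.
Proof. exact: (uniq_sub_le_big leqnn (fun x y => leq_addr y x)). Qed.

Lemma prefU_comp_subset (G : nat -> graph) (f : nat -> nat) a b :
  (forall l, (1 <= l < a)%N -> (1 <= f l < b)%N) ->
  prefU (fun l => G (f l)) a `<=` prefU G b.
Proof.
move=> fab; apply/fsubsetP => x /bigfcupP[l]; rewrite mem_index_iota andbT.
by move=> /fab fl xGfl; apply/bigfcupP; exists (f l); rewrite ?mem_index_iota ?fl.
Qed.

Lemma size_iseq (J : {fset nat}) : size (iseq J) = (size J).+1.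
Proof. by rewrite /= size_sort. Qed.

Section IseqPositions.

Variable J : {fset nat}.
Hypothesis J_pos : forall i, i \in J -> (0 < i)%N.
Local Notation t := (iseq J).

Lemma iseq_sorted : sorted ltn t.
Proof.
rewrite /iseq /= (path_sortedE ltn_trans); apply/andP; split.
  by apply/allP => i; rewrite mem_sort; exact: J_pos.
by rewrite ltn_sorted_uniq_leq sort_uniq fset_uniq (sort_sorted leq_total).
Qed.

Lemma iseq_uniq : uniq t.
Proof. exact: (sorted_uniq ltn_trans ltnn iseq_sorted). Qed.

Lemma leq_nth_iseq h k : (h <= k < size t)%N -> (nth 0 t h <= nth 0 t k)%N.
Proof.
case/andP=> hk kt.
have t_leq : sorted leq t by move: iseq_sorted; rewrite ltn_sorted_uniq_leq => /andP[].
apply: (sorted_leq_nth leq_trans leqnn 0 t_leq) => //.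
by rewrite inE (leq_ltn_trans hk kt).
Qed.

Lemma ltn_nth_iseq h k : (h < k < size t)%N -> (nth 0 t h < nth 0 t k)%N.
Proof.
case/andP=> hk kt.
apply: (sorted_ltn_nth ltn_trans 0 iseq_sorted) => //.
by rewrite inE (ltn_trans hk kt).
Qed.

Lemma nth_iseq_mem h : (h < size J)%N -> nth 0 t h.+1 \in J.
Proof. by move=> hJ; rewrite /= -(mem_sort leq) mem_nth ?size_sort. Qed.

Lemma sigma_iseq h : (h < size J)%N -> sigma J (nth 0 t h).+1 = nth 0 t h.+1.
Proof.
move=> hJ; rewrite /sigma succnK index_uniq ?iseq_uniq ?hJ //.
by rewrite size_iseq ltnS ltnW.
Qed.

Lemma sigma_bounds h l : (h < size J)%N -> (0 < l <= nth 0 t h)%N ->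
  (0 < sigma J l <= nth 0 t h)%N.
Proof.
move=> hJ /andP[l_gt0 l_le]; rewrite /sigma l_gt0 andTb.
set k := index l.-1 t; case: ifP => [kJ | k_ge].
  have t_k : nth 0 t k = l.-1 by apply: nth_index; rewrite -index_mem size_iseq ltnS ltnW.
  have kh : (k < h)%N.
    rewrite ltnNge; apply/negP => hk.
    have := @leq_nth_iseq h k; rewrite hk size_iseq ltnS (ltnW kJ) t_k => /(_ isT).
    lia.
  rewrite (@ltn_nth_iseq 0 k.+1) ?size_iseq ?ltnS // andTb.
  by apply: leq_nth_iseq; rewrite kh size_iseq ltnS ltnW.
have l_neq1 : l != 1%N.
  by apply: contraFneq k_ge => l1; rewrite /k l1; exact: leq_ltn_trans hJ.
lia.
Qed.

Lemma Delta_ominus_leq_sigma_iseq (G : nat -> graph) h : (h < size J)%N ->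
  (Delta (ominus (G (nth 0 t h.+1)) (prefU G (nth 0 t h.+1)))
     <= Delta (ominus (G (sigma J (nth 0 t h).+1))
                      (prefU (fun l => G (sigma J l)) (nth 0 t h).+1)))%N.
Proof.
move=> hJ; rewrite sigma_iseq //; apply/Delta_ominusS/prefU_comp_subset => l l_pos.
have /andP[-> sigma_le] : (0 < sigma J l <= nth 0 t h)%N by exact: sigma_bounds.
apply: leq_ltn_trans sigma_le _.
by apply: (@ltn_nth_iseq h h.+1); rewrite ltnSn size_iseq ltnS.
Qed.

End IseqPositions.

Lemma sum_Delta_ominus_leq_vecDelta_sigma m (G : nat -> graph) (J : {fset nat}) :
  (forall i, i \in J -> (1 <= i <= m)%N) ->
  (\sum_(i <- J) Delta (ominus (G i) (prefU G i))
     <= vecDelta (fun l => G (sigma J l)) m)%N.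
Proof.
move=> J_m; have J_pos i : i \in J -> (0 < i)%N by case/J_m/andP.
set Gs := fun l => G (sigma J l).
pose f l := Delta (ominus (Gs l) (prefU Gs l)).
pose pos h := (nth 0 (iseq J) h).+1.
pose g i := Delta (ominus (G i) (prefU G i)).
have -> : (\sum_(i <- J) g i = \sum_(i <- sort leq J) g i)%N.
  by apply: perm_big; rewrite perm_sym perm_sort.
rewrite (big_nth 0) size_sort.
apply: (@leq_trans (\sum_(0 <= h < size J) f (pos h))).
  rewrite big_seq [X in (_ <= X)%N]big_seq; apply: leq_sum => h.
  by rewrite mem_index_iota => /andP[_ hJ]; exact: Delta_ominus_leq_sigma_iseq.
rewrite -(big_map pos xpredT f) /vecDelta; apply: leq_sum_uniq_subset.
- rewrite map_inj_in_uniq ?iota_uniq // => h k; rewrite !mem_index_iota => hJ kJ [] /eqP.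
  by rewrite nth_uniq ?(iseq_uniq J_pos) ?size_iseq ?ltnS ?(ltnW hJ) ?(ltnW kJ) // => /eqP.
- exact: iota_uniq.
move=> l /mapP[h]; rewrite mem_index_iota => /andP[_ hJ] ->.
have /andP[_ t_le_m] := J_m _ (nth_iseq_mem hJ).
rewrite mem_index_iota ltnS ltn0Sn; apply: leq_trans t_le_m.
by apply: (ltn_nth_iseq J_pos (k:=h.+1)); rewrite ltnSn size_iseq ltnS.
Qed.

Lemma mem_rng r x : (x \in rng r) = (1 <= x <= r)%N.
Proof. by rewrite !inE mem_iota add1n ltnS. Qed.

Lemma nth_iseq_leq (I : {fset nat}) m n :
  (forall i, i \in I -> (i <= m)%N) -> (nth 0 (iseq I) n <= m)%N.
Proof.
move=> I_m; have [n_lt | n_ge] := ltnP n (size (iseq I)); last by rewrite nth_default.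
by have := mem_nth 0 n_lt; rewrite inE mem_sort => /orP[/eqP-> | /I_m].
Qed.

Lemma sub_tildeI (I : {fset nat}) j : {subset I <= tildeI I j}.
Proof. by move=> i iI; rewrite /tildeI; case: ifP => _; rewrite inE iI. Qed.

Lemma tildeI_bounded (I : {fset nat}) j m :
  (forall i, i \in I -> (1 <= i <= m)%N) -> (1 <= j <= m)%N ->
  forall i, i \in tildeI I j -> (1 <= i <= m)%N.
Proof.
move=> I_m j_m i; rewrite /tildeI.
case: ifP => _; rewrite inE mem_rng => /orP[/I_m // | /andP[-> i_le]] /=.
  by apply: leq_trans i_le (nth_iseq_leq _ _) => k /I_m /andP[].
lia.
Qed.

Unset Implicit Arguments.

Theorem lemma5p3 (m : nat) (G : nat -> graph) (I : {fset nat}) (j : nat)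
  (HI : forall i, i \in I -> (1 <= i <= m)%N) (HmI : m \in I)
  (Hj : (1 <= j <= m)%N) :
  (\sum_(i <- I) Delta (ominus (G i) (prefU G i))
     <= vecDelta (fun l => G (sigma (tildeI I j) l)) m)%N.
Proof.
apply: leq_trans (sum_Delta_ominus_leq_vecDelta_sigma G (tildeI_bounded HI Hj)).
apply: leq_sum_uniq_subset; rewrite ?fset_uniq //; exact: sub_tildeI.
Qed.
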